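(* Let $n\ge1$. There exist constants $\delta_0\in(0,1)$, $C_n>0$ and $C'_n>0$ such that for all $k\in\mathbb N_0$ and $\lambda\in\mathbb R\setminus\{0\}$ with $\mu|\lambda|\le\delta_0$, where $\mu=2(2k+n)$, $$\big|R_k(\lambda,\sigma)-C_n\big|\le C'_n\,(\mu|\lambda|)^{1/2}.$$
   Context: For $\beta>-1$ and $k\in\mathbb N_0$ the Laguerre polynomial $L_k^\beta$ is defined by $e^{-r}r^{\beta}L_k^\beta(r)=\frac1{k!}\frac{d^k}{dr^k}\big(e^{-r}r^{k+\beta}\big)$. For $n\ge1$, $k\in\mathbb N_0$, $\lambda\in\mathbb R$, set $c_n=\frac{\Gamma(\frac{n+1}2)\Gamma(n)}{\sqrt\pi\,\Gamma(\frac n2)}$ and $$R_k(\lambda,\sigma)=c_n\frac{\Gamma(k+1)}{\Gamma(k+n)}\int_{-\pi/2}^{\pi/2}L_k^{n-1}\!\big(\tfrac12|\lambda|\cos\theta\big)\,e^{-\frac14|\lambda|\cos\theta}\,e^{\frac i4\lambda\sin\theta}\,(\cos\theta)^{n-1}\,d\theta .$$ *)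

From Stdlib Require Import Reals.
From Coquelicot Require Import Coquelicot.
Open Scope R_scope.

Definition Gamma (x : R) : R :=
  RInt_gen (fun t => Rpower t (x - 1) * exp (- t)) (at_right 0) (Rbar_locally p_infty).

(* Laguerre polynomial L_k^{beta} for integer beta = b (the only case used,
   beta = n - 1): closed form of the Rodrigues formula
   e^{-r} r^b L_k^b(r) = (1/k!) d^k/dr^k (e^{-r} r^{k+b}), namely
   L_k^b(r) = sum_{j=0}^k (-1)^j binom(k+b, k-j) r^j / j!. *)
Definition laguerre (k b : nat) (r : R) : R :=
  sum_f_R0 (fun j => (-1) ^ j * INR (Factorial.fact (k + b))
                     / (INR (Factorial.fact (k - j)) * INR (Factorial.fact (b + j))) * r ^ j / INR (Factorial.fact j)) k.

Definition c_const (n : nat) : R :=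
  Gamma ((INR n + 1) / 2) * Gamma (INR n) / (sqrt PI * Gamma (INR n / 2)).

Definition integrand_re (n k : nat) (lam th : R) : R :=
  laguerre k (n - 1) (/ 2 * Rabs lam * cos th) * exp (- (/ 4 * Rabs lam * cos th))
  * cos (/ 4 * lam * sin th) * (cos th) ^ (n - 1).
Definition integrand_im (n k : nat) (lam th : R) : R :=
  laguerre k (n - 1) (/ 2 * Rabs lam * cos th) * exp (- (/ 4 * Rabs lam * cos th))
  * sin (/ 4 * lam * sin th) * (cos th) ^ (n - 1).

(* R_k(lambda, sigma) (independent of sigma), a complex number *)
Definition Rk (n k : nat) (lam : R) : C :=
  let a := c_const n * Gamma (INR k + 1) / Gamma (INR k + INR n) in
  (a * RInt (integrand_re n k lam) (- (PI / 2)) (PI / 2),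
   a * RInt (integrand_im n k lam) (- (PI / 2)) (PI / 2)).

(* Normalised by k!/(k+n-1)! = Gamma(k+1)/Gamma(k+n), the Laguerre polynomial L_k^(n-1)(r) has
   constant term 1/(n-1)! and j-th coefficient at most k^j in absolute value, so it is within
   2kr of 1/(n-1)! when kr <= 1/2.  The factors exp(-|lam| cos th / 4) and exp(i lam sin th / 4)
   are 1 + O(|lam|).  Hence the normalised integrand is within (k+1)|lam| <= mu|lam| of
   cos^(n-1) th / (n-1)!, so R_k differs from C_n = c_n (int cos^(n-1)) / (n-1)! by O(mu|lam|),
   which is below the square root once mu|lam| <= 1.  That C_n > 0 rests on Gamma > 0 on
   (0, oo), hence on the convergence of the Euler integral. *)

From Stdlib Require Import Reals Lra Lia Psatz Factorial Classical_Prop.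
From Coquelicot Require Import Coquelicot.
Open Scope R_scope.

(* [gamma_prim m t = - \int_t^oo s^m e^-s ds], obtained by integrating by parts. *)
Fixpoint gamma_prim (m : nat) (t : R) : R :=
  match m with
  | O => - exp (- t)
  | S p => - t ^ S p * exp (- t) + INR (S p) * gamma_prim p t
  end.

Lemma is_derive_gamma_prim m t : is_derive (gamma_prim m) t (t ^ m * exp (- t)).
Proof.
  induction m as [|p IH].
  - simpl. auto_derive; [easy | ring].
  - replace (t ^ S p * exp (- t)) with
      ((- INR (S p) * t ^ p * exp (- t) + t ^ S p * exp (- t))
       + INR (S p) * (t ^ p * exp (- t))) by ring.
    apply (is_derive_plus (fun t => - t ^ S p * exp (- t))).
    + auto_derive; [easy |]. rewrite <- tech_pow_Rmult. simpl. ring.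
    + now apply (is_derive_scal (gamma_prim p)).
Qed.

Lemma gamma_prim_0 m : gamma_prim m 0 = - INR (fact m).
Proof.
  induction m as [|p IH]; cbn [gamma_prim].
  - rewrite Ropp_0, exp_0. simpl. ring.
  - rewrite IH, fact_simpl, mult_INR. simpl. ring.
Qed.

Lemma gamma_prim_nonpos m t : 0 <= t -> gamma_prim m t <= 0.
Proof.
  intros Ht. assert (He := exp_pos (- t)).
  induction m as [|p IH]; cbn [gamma_prim].
  - lra.
  - assert (0 <= t ^ S p) by (apply pow_le; lra).
    assert (0 <= INR (S p)) by apply pos_INR.
    nra.
Qed.

Lemma pow_mul_exp_le j t : 0 < t -> t ^ j * exp (- t) <= INR (fact (S j)) / t.
Proof.
  intros Ht.
  assert (Hf := INR_fact_lt_0 (S j)). assert (He := exp_pos t).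
  assert (Hlast : t ^ S j / INR (fact (S j)) <= exp t).
  { eapply Rle_trans; [| apply (exp_ge_taylor t (S j)); lra]. rewrite tech5.
    enough (0 <= sum_f_R0 (fun k => t ^ k / INR (fact k)) j) by lra.
    apply cond_pos_sum. intros k.
    apply Rdiv_le_0_compat; [apply pow_le; lra | apply INR_fact_lt_0]. }
  apply Rle_div_l in Hlast; [| lra].
  replace (t ^ j * exp (- t)) with (t ^ S j / (t * exp t))
    by (rewrite exp_Ropp; simpl; field; lra).
  apply Rle_div_l; [nra |].
  replace (INR (fact (S j)) / t * (t * exp t)) with (exp t * INR (fact (S j)))
    by (field; lra).
  exact Hlast.
Qed.

Lemma is_lim_pow_mul_exp j : is_lim (fun t => t ^ j * exp (- t)) p_infty 0.
Proof.
  apply is_lim_le_le_loc with (f := fun _ => 0) (g := fun t => INR (fact (S j)) * / t).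
  - exists 0. intros t Ht. split.
    + apply Rmult_le_pos; [apply pow_le; lra | apply Rlt_le, exp_pos].
    + now apply pow_mul_exp_le.
  - apply is_lim_const.
  - replace (Finite 0) with (Rbar_mult (INR (fact (S j))) (Rbar_inv p_infty))
      by (simpl; f_equal; ring).
    apply is_lim_scal_l, is_lim_inv; [apply is_lim_id | discriminate].
Qed.

Lemma is_lim_gamma_prim m : is_lim (gamma_prim m) p_infty 0.
Proof.
  induction m as [|p IH]; cbn [gamma_prim].
  - replace (Finite 0) with (Rbar_opp 0) by (simpl; f_equal; ring).
    apply is_lim_opp.
    apply (is_lim_ext (fun t => t ^ 0 * exp (- t))); [intros; simpl; ring |].
    apply is_lim_pow_mul_exp.
  - replace (Finite 0) with (Rbar_plus (Rbar_opp 0) (Rbar_mult (INR (S p)) 0))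
      by (simpl; f_equal; ring).
    apply (is_lim_plus (fun t => - t ^ S p * exp (- t)) _ _
             (Rbar_opp 0) (Rbar_mult (INR (S p)) 0)); [| | easy].
    + apply (is_lim_ext (fun t => - (t ^ S p * exp (- t)))); [intros; ring |].
      apply is_lim_opp, is_lim_pow_mul_exp.
    + now apply is_lim_scal_l.
Qed.

Lemma Gamma_nat m : Gamma (INR m + 1) = INR (fact m).
Proof.
  unfold Gamma. apply is_RInt_gen_unique.
  assert (Hd : forall t, Derive (gamma_prim m) t = t ^ m * exp (- t))
    by (intros; apply is_derive_unique, is_derive_gamma_prim).
  apply is_RInt_gen_ext with (f := Derive (gamma_prim m)).
  { apply Filter_prod with (Q := fun a => 0 < a) (R := fun b => 0 < b).
    - unfold at_right, within. now apply filter_forall.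
    - now exists 0.
    - intros a b Ha Hb t [Ht _]. simpl in Ht.
      assert (0 < t) by (eapply Rle_lt_trans; [| exact Ht]; apply Rmin_case; lra).
      rewrite Hd. replace (INR m + 1 - 1) with (INR m) by ring.
      now rewrite Rpower_pow. }
  replace (INR (fact m)) with (0 - gamma_prim m 0) by (rewrite gamma_prim_0; ring).
  apply is_RInt_gen_Derive.
  - apply filter_forall. intros _ t _. eexists. apply is_derive_gamma_prim.
  - apply filter_forall. intros _ t _.
    apply (continuous_ext (fun t => t ^ m * exp (- t))); [intros; now rewrite Hd |].
    apply (ex_derive_continuous (V := R_NormedModule)). auto_derive. easy.
  - eapply filterlim_filter_le_1; [apply filter_le_within |].
    apply (ex_derive_continuous (V := R_NormedModule)).
    eexists. apply is_derive_gamma_prim.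
  - apply is_lim_gamma_prim.
Qed.

Section PositiveHalfLineIntegral.

Variable f : R -> R.
Hypothesis f_cont : forall t, 0 < t -> continuous f t.
Hypothesis f_pos : forall t, 0 < t -> 0 < f t.

Lemma ex_RInt_pos_halfline a b : 0 < a -> a <= b -> ex_RInt f a b.
Proof.
  intros Ha Hab. apply (ex_RInt_continuous (V := R_CompleteNormedModule)).
  intros t Ht. rewrite Rmin_left in Ht by lra. apply f_cont. lra.
Qed.

Lemma RInt_pos_halfline_le a' a b b' :
  0 < a' -> a' <= a -> a <= b -> b <= b' -> RInt f a b <= RInt f a' b'.
Proof.
  intros Ha' Ha'a Hab Hbb'.
  assert (Hge0 : forall u v, 0 < u -> u <= v -> 0 <= RInt f u v).
  { intros u v Hu Huv. apply RInt_ge_0; [easy | now apply ex_RInt_pos_halfline |].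
    intros t Ht. apply Rlt_le, f_pos. lra. }
  rewrite <- (RInt_Chasles f a' a b'), <- (RInt_Chasles f a b b')
    by (apply ex_RInt_pos_halfline; lra).
  assert (0 <= RInt f a' a) by (apply Hge0; lra).
  assert (0 <= RInt f b b') by (apply Hge0; lra).
  change plus with Rplus. lra.
Qed.

(* The improper integral is the supremum of the integrals over compact subintervals. *)
Lemma is_RInt_gen_pos_halfline M :
  (forall a b, 0 < a -> a <= b -> RInt f a b <= M) ->
  exists l, is_RInt_gen f (at_right 0) (Rbar_locally p_infty) l /\ 0 < l.
Proof.
  intros HM.
  set (E := fun y => exists a b, 0 < a /\ a <= b /\ y = RInt f a b).
  assert (HEb : bound E) by (exists M; intros y (a & b & Ha & Hab & ->); auto).
  assert (HE1 : E (RInt f (/ 2) 1)) by (exists (/ 2), 1; repeat split; lra).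
  destruct (completeness E HEb (ex_intro _ _ HE1)) as [l [Hub Hlub]].
  exists l. split.
  - intros P [eps HP].
    destruct (classic (exists y, E y /\ l - eps < y))
      as [(y & (a0 & b0 & Ha0 & Hab0 & ->) & Hy) | Hno].
    2:{ exfalso. assert (l <= l - eps).
        { apply Hlub. intros y Ey. apply Rnot_lt_le. intros Hy. apply Hno. eauto. }
        destruct eps; simpl in *; lra. }
    apply Filter_prod with (Q := fun a => 0 < a < a0) (R := fun b => b0 < b).
    + exists (mkposreal a0 Ha0). intros u Hu Hu0. change (Rabs (u - 0) < a0) in Hu.
      rewrite Rminus_0_r, Rabs_right in Hu; lra.
    + now exists b0.
    + intros a b [Ha Ha0'] Hb. exists (RInt f a b). split.
      * apply (RInt_correct (V := R_CompleteNormedModule)), ex_RInt_pos_halfline; lra.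
      * apply HP. change (Rabs (RInt f a b - l) < eps).
        assert (RInt f a b <= l) by (apply Hub; exists a, b; repeat split; lra).
        assert (RInt f a0 b0 <= RInt f a b) by (apply RInt_pos_halfline_le; lra).
        rewrite Rabs_left1; lra.
  - apply Rlt_le_trans with (RInt f (/ 2) 1); [| now apply Hub].
    apply RInt_gt_0; [lra | intros; apply f_pos; lra | intros; apply f_cont; lra].
Qed.

End PositiveHalfLineIntegral.

Definition gamma_integrand (x t : R) : R := Rpower t (x - 1) * exp (- t).

Lemma continuous_Rpower_l y t : 0 < t -> continuous (fun t => Rpower t y) t.
Proof.
  intros Ht. apply (ex_derive_continuous (V := R_NormedModule)).
  eexists. apply is_derive_Reals, derivable_pt_lim_power, Ht.
Qed.

Lemma continuous_gamma_integrand x t : 0 < t -> continuous (gamma_integrand x) t.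
Proof.
  intros Ht. apply (continuous_mult (fun t => Rpower t (x - 1)) (fun t => exp (- t))).
  - now apply continuous_Rpower_l.
  - apply (ex_derive_continuous (V := R_NormedModule)). auto_derive. easy.
Qed.

Lemma gamma_integrand_pos x t : 0 < t -> 0 < gamma_integrand x t.
Proof. intros _. apply Rmult_lt_0_compat; apply exp_pos. Qed.

Lemma RInt_gamma_integrand_0_1_le x a : 0 < x -> 0 < a <= 1 ->
  RInt (gamma_integrand x) a 1 <= / x.
Proof.
  intros Hx Ha.
  assert (Hint : is_RInt (fun t => Rpower t (x - 1)) a 1 (Rpower 1 x / x - Rpower a x / x)).
  { apply (is_RInt_derive (V := R_CompleteNormedModule) (fun t => Rpower t x / x)).
    - intros t Ht. rewrite Rmin_left in Ht by lra. apply is_derive_Reals.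
      replace (Rpower t (x - 1)) with (x * Rpower t (x - 1) * / x) by (field; lra).
      apply derivable_pt_lim_scal_right, derivable_pt_lim_power. lra.
    - intros t Ht. rewrite Rmin_left in Ht by lra. apply continuous_Rpower_l. lra. }
  eapply Rle_trans.
  - apply (RInt_le _ (fun t => Rpower t (x - 1))); [lra | | eexists; exact Hint |].
    + apply ex_RInt_pos_halfline; [apply continuous_gamma_integrand | lra | lra].
    + intros t Ht. unfold gamma_integrand.
      assert (0 < Rpower t (x - 1)) by apply exp_pos.
      assert (exp (- t) < 1) by (rewrite <- exp_0; apply exp_increasing; lra).
      nra.
  - rewrite (is_RInt_unique _ _ _ _ Hint).
    replace (Rpower 1 x) with 1 by (unfold Rpower; now rewrite ln_1, Rmult_0_r, exp_0).
    assert (0 < Rpower a x / x) by (apply Rdiv_lt_0_compat; [apply exp_pos | easy]).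
    unfold Rdiv. lra.
Qed.

Lemma RInt_gamma_integrand_1_le x N b : x - 1 <= INR N -> 1 <= b ->
  RInt (gamma_integrand x) 1 b <= - gamma_prim N 1.
Proof.
  intros HN Hb.
  assert (Hint : is_RInt (fun t => t ^ N * exp (- t)) 1 b (gamma_prim N b - gamma_prim N 1)).
  { apply (is_RInt_derive (V := R_CompleteNormedModule)).
    - intros t _. apply is_derive_gamma_prim.
    - intros t _. apply (ex_derive_continuous (V := R_NormedModule)). auto_derive. easy. }
  eapply Rle_trans.
  - apply (RInt_le _ (fun t => t ^ N * exp (- t))); [easy | | eexists; exact Hint |].
    + apply ex_RInt_pos_halfline; [apply continuous_gamma_integrand | lra | easy].
    + intros t Ht. apply Rmult_le_compat_r; [apply Rlt_le, exp_pos |].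
      rewrite <- Rpower_pow by lra. apply Rle_Rpower; lra.
  - rewrite (is_RInt_unique _ _ _ _ Hint).
    assert (gamma_prim N b <= 0) by (apply gamma_prim_nonpos; lra).
    change minus with Rminus. lra.
Qed.

Lemma Gamma_pos x : 0 < x -> 0 < Gamma x.
Proof.
  intros Hx. destruct (INR_unbounded x) as [N HN].
  assert (Hcont := continuous_gamma_integrand x).
  assert (Hpos := gamma_integrand_pos x).
  destruct (is_RInt_gen_pos_halfline (gamma_integrand x) Hcont Hpos
              (/ x - gamma_prim N 1)) as (l & Hl & Hl0).
  - intros a b Ha Hab.
    assert (Ha1 : 0 < Rmin a 1 <= 1) by (split; [apply Rmin_case | apply Rmin_r]; lra).
    assert (Hb1 : 1 <= Rmax b 1) by apply Rmax_r.
    eapply Rle_trans.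
    + apply (RInt_pos_halfline_le _ Hcont Hpos (Rmin a 1) a b (Rmax b 1));
        [lra | apply Rmin_l | easy | apply Rmax_l].
    + rewrite <- (RInt_Chasles _ (Rmin a 1) 1 (Rmax b 1))
        by (apply (ex_RInt_pos_halfline _ Hcont); lra).
      assert (H01 := RInt_gamma_integrand_0_1_le x (Rmin a 1) Hx Ha1).
      assert (H1b := RInt_gamma_integrand_1_le x N (Rmax b 1) ltac:(lra) Hb1).
      change plus with Rplus. lra.
  - unfold Gamma. change (fun t => Rpower t (x - 1) * exp (- t)) with (gamma_integrand x).
    now rewrite (is_RInt_gen_unique _ _ Hl).
Qed.

Definition laguerre_scale (k b : nat) : R := INR (fact k) / INR (fact (k + b)).

Lemma fact_le_pow_mul_fact_sub j k : (j <= k)%nat -> (fact k <= k ^ j * fact (k - j))%nat.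
Proof.
  induction j as [|j IH]; intros Hj.
  - rewrite Nat.sub_0_r. simpl. lia.
  - replace (k - j)%nat with (S (k - S j)) in IH by lia.
    specialize (IH ltac:(lia)). rewrite fact_simpl in IH.
    rewrite Nat.pow_succ_r'.
    assert (S (k - S j) * fact (k - S j) <= k * fact (k - S j))%nat
      by (apply Nat.mul_le_mono_r; lia).
    nia.
Qed.

Definition laguerre_scaled_coef (k b j : nat) : R :=
  INR (fact k) / (INR (fact (k - j)) * INR (fact (b + j)) * INR (fact j)).

Lemma laguerre_scaled_eq_sum k b r : laguerre_scale k b * laguerre k b r
  = sum_f_R0 (fun j => (-1) ^ j * laguerre_scaled_coef k b j * r ^ j) k.
Proof.
  unfold laguerre_scale, laguerre, laguerre_scaled_coef.
  rewrite scal_sum. apply sum_eq. intros j _.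
  assert (H1 := INR_fact_neq_0 (k + b)). assert (H2 := INR_fact_neq_0 (k - j)).
  assert (H3 := INR_fact_neq_0 (b + j)). assert (H4 := INR_fact_neq_0 j).
  field. auto.
Qed.

Lemma laguerre_scaled_coef_0 k b : laguerre_scaled_coef k b 0 = / INR (fact b).
Proof.
  unfold laguerre_scaled_coef. rewrite Nat.sub_0_r, Nat.add_0_r. simpl.
  assert (H1 := INR_fact_neq_0 k). assert (H2 := INR_fact_neq_0 b). field. auto.
Qed.

Lemma laguerre_scaled_coef_nonneg k b j : 0 <= laguerre_scaled_coef k b j.
Proof.
  apply Rdiv_le_0_compat; [apply pos_INR |].
  apply Rmult_lt_0_compat; [apply Rmult_lt_0_compat |]; apply INR_fact_lt_0.
Qed.

Lemma laguerre_scaled_coef_le k b j : (j <= k)%nat -> laguerre_scaled_coef k b j <= INR k ^ j.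
Proof.
  intros Hj.
  assert (Hk := fact_le_pow_mul_fact_sub j k Hj).
  assert (H23 : (1 <= fact (b + j) * fact j)%nat)
    by (assert (H2 := lt_O_fact (b + j)); assert (H3 := lt_O_fact j); nia).
  apply Rle_div_l.
  { apply Rmult_lt_0_compat; [apply Rmult_lt_0_compat |]; apply INR_fact_lt_0. }
  rewrite <- pow_INR, <- !mult_INR. apply le_INR.
  rewrite <- Nat.mul_assoc, Nat.mul_assoc. nia.
Qed.

Lemma Rabs_sum_f_R0_sub_first_le (t : nat -> R) x N : 0 <= x <= / 2 ->
  (forall j, (1 <= j <= N)%nat -> Rabs (t j) <= x ^ j) ->
  Rabs (sum_f_R0 t N - t O) <= 2 * x.
Proof.
  intros Hx Ht.
  enough (Rabs (sum_f_R0 t N - t O) <= 2 * x - 2 * x ^ S N)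
    by (assert (0 <= x ^ S N) by (apply pow_le; lra); lra).
  induction N as [|N IH]; simpl sum_f_R0.
  - rewrite Rminus_diag, Rabs_R0. simpl. lra.
  - specialize (IH (fun j Hj => Ht j ltac:(lia))).
    specialize (Ht (S N) ltac:(lia)).
    replace (sum_f_R0 t N + t (S N) - t O) with ((sum_f_R0 t N - t O) + t (S N)) by ring.
    eapply Rle_trans; [apply Rabs_triang |].
    assert (0 <= x ^ S N) by (apply pow_le; lra).
    change (x ^ S (S N)) with (x * x ^ S N). nra.
Qed.

Lemma laguerre_scaled_approx k b r : 0 <= r -> INR k * r <= / 2 ->
  Rabs (laguerre_scale k b * laguerre k b r - / INR (fact b)) <= 2 * (INR k * r).
Proof.
  intros Hr Hkr.
  rewrite laguerre_scaled_eq_sum, <- (laguerre_scaled_coef_0 k b).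
  replace (laguerre_scaled_coef k b 0) with ((-1) ^ 0 * laguerre_scaled_coef k b 0 * r ^ 0)
    by (simpl; ring).
  apply Rabs_sum_f_R0_sub_first_le; [split; [apply Rmult_le_pos; [apply pos_INR | easy] | easy] |].
  intros j Hj.
  assert (Hc := laguerre_scaled_coef_le k b j ltac:(lia)).
  assert (Hrj : 0 <= r ^ j) by (apply pow_le, Hr).
  rewrite !Rabs_mult, pow_1_abs, Rmult_1_l, (Rabs_pos_eq _ (laguerre_scaled_coef_nonneg k b j)),
    (Rabs_pos_eq _ Hrj), Rpow_mult_distr.
  now apply Rmult_le_compat_r.
Qed.

Lemma ex_derive_laguerre k b r : ex_derive (laguerre k b) r.
Proof.
  set (a j r := (-1) ^ j * INR (fact (k + b))
    / (INR (fact (k - j)) * INR (fact (b + j))) * r ^ j / INR (fact j)).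
  apply (ex_derive_ext (fun r => sum_n (fun j => a j r) k)).
  { intros y. rewrite sum_n_Reals. reflexivity. }
  apply (ex_derive_sum_n (K := R_AbsRing) (V := R_NormedModule)).
  intros j _. unfold a. auto_derive. easy.
Qed.

Lemma Rabs_sin_le y : Rabs (sin y) <= Rabs y.
Proof.
  assert (H := bounded_variation sin cos 1 0 y).
  rewrite sin_0, !Rminus_0_r, Rmult_1_l in H. apply H.
  intros t _. split; [auto_derive; [easy | ring] |].
  apply Rabs_le, COS_bound.
Qed.

Lemma Rabs_cos_sub_1_le y : Rabs (cos y - 1) <= Rabs y.
Proof.
  assert (H := bounded_variation cos (fun t => - sin t) 1 0 y).
  rewrite cos_0, Rminus_0_r, Rmult_1_l in H. apply H.
  intros t _. split; [auto_derive; [easy | ring] |].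
  rewrite Rabs_Ropp. apply Rabs_le, SIN_bound.
Qed.

Lemma Rabs_mul_mul_sub_le P p e c : Rabs c <= 1 ->
  Rabs (P * e * c - p) <= Rabs (P - p) + Rabs P * (Rabs (e - 1) + Rabs (c - 1)).
Proof.
  intros Hc.
  replace (P * e * c - p) with ((P - p) + P * ((e - 1) * c + (c - 1))) by ring.
  eapply Rle_trans; [apply Rabs_triang |].
  rewrite Rabs_mult. apply Rplus_le_compat_l, Rmult_le_compat_l; [apply Rabs_pos |].
  eapply Rle_trans; [apply Rabs_triang |].
  rewrite Rabs_mult. assert (0 <= Rabs (e - 1)) by apply Rabs_pos. nra.
Qed.

Section IntegrandEstimates.

Variables (n k : nat) (lam th : R).
Hypothesis th_range : - (PI / 2) <= th <= PI / 2.
Hypothesis k_lam_small : INR k * Rabs lam <= 1.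

Local Notation P := (laguerre_scale k (n - 1) * laguerre k (n - 1) (/ 2 * Rabs lam * cos th)).
Local Notation E := (exp (- (/ 4 * Rabs lam * cos th))).
Local Notation phi := (/ 4 * lam * sin th).

Let cos_th_range : 0 <= cos th <= 1.
Proof. split; [apply cos_ge_0; lra | apply COS_bound]. Qed.

Let Rabs_cos_pow_le : Rabs (cos th ^ (n - 1)) <= 1.
Proof.
  rewrite <- RPow_abs, <- (pow1 (n - 1)). apply pow_incr.
  split; [apply Rabs_pos | apply Rabs_le; assert (H := COS_bound th); lra].
Qed.

Lemma laguerre_factor_approx : Rabs (P - / INR (fact (n - 1))) <= INR k * Rabs lam.
Proof.
  assert (Hc := cos_th_range).
  assert (0 <= Rabs lam) by apply Rabs_pos.
  assert (0 <= INR k * Rabs lam) by (apply Rmult_le_pos; [apply pos_INR | easy]).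
  assert (0 <= INR k * Rabs lam * cos th <= INR k * Rabs lam) by (split; nra).
  assert (Hkr : INR k * (/ 2 * Rabs lam * cos th) = / 2 * (INR k * Rabs lam * cos th)) by ring.
  eapply Rle_trans; [apply laguerre_scaled_approx | rewrite Hkr; lra].
  - apply Rmult_le_pos; [apply Rmult_le_pos |]; lra.
  - rewrite Hkr. lra.
Qed.

Lemma Rabs_laguerre_factor_le : Rabs P <= 2.
Proof.
  assert (H := laguerre_factor_approx).
  assert (0 < / INR (fact (n - 1)) <= 1).
  { split; [apply Rinv_0_lt_compat, INR_fact_lt_0 |].
    rewrite <- Rinv_1. apply Rinv_le_contravar; [lra | apply (le_INR 1), lt_O_fact]. }
  apply Rabs_le_between' in H. apply Rabs_le. lra.
Qed.

Lemma exp_factor_bounds : Rabs E <= 1 /\ Rabs (E - 1) <= Rabs lam / 4.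
Proof.
  assert (Hc := cos_th_range). assert (0 <= Rabs lam) by apply Rabs_pos.
  assert (Hs : 0 <= / 4 * Rabs lam * cos th <= Rabs lam / 4) by (split; nra).
  assert (H1 := exp_ineq1_le (- (/ 4 * Rabs lam * cos th))).
  assert (H0 := exp_pos (- (/ 4 * Rabs lam * cos th))).
  assert (E <= 1).
  { rewrite <- exp_0. destruct (Req_dec (/ 4 * Rabs lam * cos th) 0) as [-> | Hne].
    - rewrite Ropp_0. lra.
    - apply Rlt_le, exp_increasing. lra. }
  split; [rewrite Rabs_right | rewrite Rabs_left1]; lra.
Qed.

Lemma Rabs_phase_le : Rabs phi <= Rabs lam / 4.
Proof.
  rewrite !Rabs_mult, (Rabs_right (/ 4)) by lra.
  assert (Rabs (sin th) <= 1) by apply Rabs_le, SIN_bound.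
  assert (0 <= Rabs lam) by apply Rabs_pos. nra.
Qed.

Lemma integrand_re_approx :
  Rabs (laguerre_scale k (n - 1) * integrand_re n k lam th
        - / INR (fact (n - 1)) * cos th ^ (n - 1)) <= (INR k + 1) * Rabs lam.
Proof.
  replace (laguerre_scale k (n - 1) * integrand_re n k lam th
           - / INR (fact (n - 1)) * cos th ^ (n - 1))
    with (cos th ^ (n - 1) * (P * E * cos phi - / INR (fact (n - 1))))
    by (unfold integrand_re; ring).
  assert (Hw := Rabs_cos_pow_le).
  assert (Hc : Rabs (cos phi - 1) <= Rabs lam / 4)
    by (eapply Rle_trans; [apply Rabs_cos_sub_1_le | apply Rabs_phase_le]).
  assert (HP := laguerre_factor_approx). assert (HP2 := Rabs_laguerre_factor_le).
  destruct exp_factor_bounds as [_ He].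
  assert (H := Rabs_mul_mul_sub_le P (/ INR (fact (n - 1))) E (cos phi)
                 ltac:(apply Rabs_le, COS_bound)).
  assert (Rabs P * (Rabs (E - 1) + Rabs (cos phi - 1)) <= 2 * (Rabs lam / 2)).
  { apply Rmult_le_compat; [apply Rabs_pos | | easy | lra].
    apply Rplus_le_le_0_compat; apply Rabs_pos. }
  rewrite Rabs_mult.
  assert (0 <= Rabs (P * E * cos phi - / INR (fact (n - 1)))) by apply Rabs_pos.
  assert (Rabs (cos th ^ (n - 1)) * Rabs (P * E * cos phi - / INR (fact (n - 1)))
          <= Rabs (P * E * cos phi - / INR (fact (n - 1)))) by nra.
  lra.
Qed.

Lemma integrand_im_bound :
  Rabs (laguerre_scale k (n - 1) * integrand_im n k lam th) <= (INR k + 1) * Rabs lam.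
Proof.
  replace (laguerre_scale k (n - 1) * integrand_im n k lam th)
    with (P * (E * (sin phi * cos th ^ (n - 1)))) by (unfold integrand_im; ring).
  assert (Hw := Rabs_cos_pow_le).
  assert (Hs : Rabs (sin phi) <= Rabs lam / 4)
    by (eapply Rle_trans; [apply Rabs_sin_le | apply Rabs_phase_le]).
  assert (HP2 := Rabs_laguerre_factor_le).
  destruct exp_factor_bounds as [He _].
  set (Q := P) in *. rewrite !Rabs_mult.
  assert (0 <= Rabs (sin phi)) by apply Rabs_pos.
  assert (0 <= Rabs (cos th ^ (n - 1))) by apply Rabs_pos.
  assert (0 <= Rabs E) by apply Rabs_pos.
  assert (Hrest : Rabs E * (Rabs (sin phi) * Rabs (cos th ^ (n - 1))) <= Rabs lam / 4).
  { rewrite <- (Rmult_1_l (Rabs lam / 4)).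
    apply Rmult_le_compat; [easy | apply Rmult_le_pos; easy | easy |].
    rewrite <- (Rmult_1_r (Rabs lam / 4)). now apply Rmult_le_compat. }
  assert (0 <= INR k) by apply pos_INR. assert (0 <= Rabs lam) by apply Rabs_pos.
  assert (Rabs Q * (Rabs E * (Rabs (sin phi) * Rabs (cos th ^ (n - 1)))) <= 2 * (Rabs lam / 4))
    by (apply Rmult_le_compat; [apply Rabs_pos | apply Rmult_le_pos; [easy | nra] | easy | easy]).
  nra.
Qed.

End IntegrandEstimates.

Lemma continuous_integrand_re n k lam th : continuous (integrand_re n k lam) th.
Proof.
  apply (ex_derive_continuous (V := R_NormedModule)). unfold integrand_re.
  auto_derive. apply ex_derive_laguerre.
Qed.

Lemma continuous_integrand_im n k lam th : continuous (integrand_im n k lam) th.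
Proof.
  apply (ex_derive_continuous (V := R_NormedModule)). unfold integrand_im.
  auto_derive. apply ex_derive_laguerre.
Qed.

Lemma abs_RInt_scal_sub_le (f g : R -> R) a b c d M : a <= b ->
  (forall x, continuous f x) -> (forall x, continuous g x) ->
  (forall t, a <= t <= b -> Rabs (c * f t - d * g t) <= M) ->
  Rabs (c * RInt f a b - d * RInt g a b) <= (b - a) * M.
Proof.
  intros Hab Hf Hg HM.
  assert (Hexf : ex_RInt f a b) by (apply (ex_RInt_continuous (V := R_CompleteNormedModule)); auto).
  assert (Hexg : ex_RInt g a b) by (apply (ex_RInt_continuous (V := R_CompleteNormedModule)); auto).
  assert (Hexcf : ex_RInt (fun t => c * f t) a b) by now apply (ex_RInt_scal f a b c).
  assert (Hexdg : ex_RInt (fun t => d * g t) a b) by now apply (ex_RInt_scal g a b d).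
  replace (c * RInt f a b - d * RInt g a b)
    with (RInt (fun t => c * f t - d * g t) a b).
  - apply abs_RInt_le_const; [easy | | easy].
    now apply (ex_RInt_minus (fun t => c * f t) (fun t => d * g t)).
  - assert (Ec : RInt (fun t => c * f t) a b = c * RInt f a b)
      by exact (RInt_scal f a b c Hexf).
    assert (Ed : RInt (fun t => d * g t) a b = d * RInt g a b)
      by exact (RInt_scal g a b d Hexg).
    rewrite <- Ec, <- Ed.
    exact (RInt_minus (fun t => c * f t) (fun t => d * g t) a b Hexcf Hexdg).
Qed.

Lemma abs_RInt_scal_le (f : R -> R) a b c M : a <= b -> (forall x, continuous f x) ->
  (forall t, a <= t <= b -> Rabs (c * f t) <= M) -> Rabs (c * RInt f a b) <= (b - a) * M.
Proof.
  intros Hab Hf HM.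
  assert (Hex : ex_RInt f a b) by (apply (ex_RInt_continuous (V := R_CompleteNormedModule)); auto).
  assert (Ec : RInt (fun t => c * f t) a b = c * RInt f a b) by exact (RInt_scal f a b c Hex).
  rewrite <- Ec. apply abs_RInt_le_const; [easy | now apply (ex_RInt_scal f a b c) | easy].
Qed.

Lemma c_const_pos n : (1 <= n)%nat -> 0 < c_const n.
Proof.
  intros Hn. assert (1 <= INR n) by (apply (le_INR 1); lia).
  assert (HPI := PI_RGT_0).
  unfold c_const. apply Rdiv_lt_0_compat; [apply Rmult_lt_0_compat |].
  - apply Gamma_pos. lra.
  - apply Gamma_pos. lra.
  - apply Rmult_lt_0_compat; [now apply sqrt_lt_R0 | apply Gamma_pos; lra].
Qed.

(* Equal to 1 by the Beta integral for [cos^(n-1)], which the estimate does not need. *)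
Definition rk_limit (n : nat) : R :=
  c_const n * RInt (fun th => cos th ^ (n - 1)) (- (PI / 2)) (PI / 2) / INR (fact (n - 1)).

Lemma rk_limit_pos n : (1 <= n)%nat -> 0 < rk_limit n.
Proof.
  intros Hn. assert (HPI := PI_RGT_0).
  apply Rdiv_lt_0_compat; [apply Rmult_lt_0_compat | apply INR_fact_lt_0].
  - now apply c_const_pos.
  - apply RInt_gt_0; [lra | intros th Hth; apply pow_lt, cos_gt_0; lra |].
    intros th _. apply (ex_derive_continuous (V := R_NormedModule)). auto_derive. easy.
Qed.

Lemma Rk_eq n k lam : (1 <= n)%nat ->
  Rk n k lam =
  (c_const n * (laguerre_scale k (n - 1) * RInt (integrand_re n k lam) (- (PI / 2)) (PI / 2)),
   c_const n * (laguerre_scale k (n - 1) * RInt (integrand_im n k lam) (- (PI / 2)) (PI / 2))).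
Proof.
  intros Hn.
  assert (Hscale : Gamma (INR k + 1) / Gamma (INR k + INR n) = laguerre_scale k (n - 1)).
  { unfold laguerre_scale. rewrite <- !Gamma_nat. do 2 f_equal.
    rewrite plus_INR, minus_INR by lia. simpl. ring. }
  unfold Rk. cbv zeta. rewrite <- Hscale. unfold Rdiv. f_equal; ring.
Qed.

Lemma Rk_re_approx n k lam : (1 <= n)%nat -> INR k * Rabs lam <= 1 ->
  Rabs (fst (Rk n k lam) - rk_limit n) <= c_const n * (PI * ((INR k + 1) * Rabs lam)).
Proof.
  intros Hn Hkl. assert (Hc := c_const_pos n Hn).
  rewrite (Rk_eq n k lam Hn). unfold rk_limit. cbn [fst].
  set (J := RInt (integrand_re n k lam) (- (PI / 2)) (PI / 2)).
  set (I := RInt (fun th => cos th ^ (n - 1)) (- (PI / 2)) (PI / 2)).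
  replace (c_const n * (laguerre_scale k (n - 1) * J) - c_const n * I / INR (fact (n - 1)))
    with (c_const n * (laguerre_scale k (n - 1) * J - / INR (fact (n - 1)) * I))
    by (unfold Rdiv; ring).
  rewrite Rabs_mult, Rabs_pos_eq by lra. apply Rmult_le_compat_l; [lra |].
  replace (PI * ((INR k + 1) * Rabs lam))
    with ((PI / 2 - - (PI / 2)) * ((INR k + 1) * Rabs lam)) by field.
  apply abs_RInt_scal_sub_le; [assert (HPI := PI_RGT_0); lra | apply continuous_integrand_re | |].
  - intros th. apply (ex_derive_continuous (V := R_NormedModule)). auto_derive. easy.
  - intros th Hth. now apply integrand_re_approx.
Qed.

Lemma Rk_im_bound n k lam : (1 <= n)%nat -> INR k * Rabs lam <= 1 ->
  Rabs (snd (Rk n k lam)) <= c_const n * (PI * ((INR k + 1) * Rabs lam)).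
Proof.
  intros Hn Hkl. assert (Hc := c_const_pos n Hn).
  rewrite (Rk_eq n k lam Hn). cbn [snd].
  rewrite Rabs_mult, Rabs_pos_eq by lra. apply Rmult_le_compat_l; [lra |].
  replace (PI * ((INR k + 1) * Rabs lam))
    with ((PI / 2 - - (PI / 2)) * ((INR k + 1) * Rabs lam)) by field.
  apply abs_RInt_scal_le; [assert (HPI := PI_RGT_0); lra | apply continuous_integrand_im |].
  intros th Hth. now apply integrand_im_bound.
Qed.

Lemma le_sqrt_self x : 0 <= x <= 1 -> x <= sqrt x.
Proof.
  intros Hx. rewrite <- (sqrt_sqrt x) at 1 by lra.
  assert (sqrt x <= 1) by (rewrite <- sqrt_1; apply sqrt_le_1_alt; lra).
  assert (0 <= sqrt x) by apply sqrt_pos. nra.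
Qed.

Theorem lemma4p1 (n : nat) (hn : (1 <= n)%nat) :
  exists delta0 Cn Cn' : R,
    0 < delta0 < 1 /\ 0 < Cn /\ 0 < Cn' /\
    forall (k : nat) (lam : R),
      lam <> 0 ->
      2 * (2 * INR k + INR n) * Rabs lam <= delta0 ->
      Cmod (Cminus (Rk n k lam) (RtoC Cn))
        <= Cn' * sqrt (2 * (2 * INR k + INR n) * Rabs lam).
Proof.
  assert (Hc := c_const_pos n hn). assert (HPI := PI_RGT_0).
  assert (Hs2 : 0 < sqrt 2) by (apply sqrt_lt_R0; lra).
  exists (/ 2), (rk_limit n), (sqrt 2 * (c_const n * PI)).
  split; [lra |]. split; [now apply rk_limit_pos |]. split; [apply Rmult_lt_0_compat; nra |].
  intros k lam _ Hmu.
  set (B := 2 * (2 * INR k + INR n) * Rabs lam) in *.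
  assert (1 <= INR n) by (apply (le_INR 1); lia).
  assert (0 <= INR k) by apply pos_INR. assert (0 <= Rabs lam) by apply Rabs_pos.
  assert (HkB : (INR k + 1) * Rabs lam <= B) by (unfold B; nra).
  assert (HB_sqrt : B <= sqrt B) by (apply le_sqrt_self; split; [unfold B; nra | lra]).
  assert (Hkl : INR k * Rabs lam <= 1) by (unfold B in Hmu; nra).
  assert (Hre := Rk_re_approx n k lam hn Hkl). assert (Him := Rk_im_bound n k lam hn Hkl).
  assert (c_const n * (PI * ((INR k + 1) * Rabs lam)) <= c_const n * PI * sqrt B)
    by (rewrite <- Rmult_assoc; apply Rmult_le_compat_l; nra).
  eapply Rle_trans; [apply Cmod_2Rmax |].
  rewrite Rmult_assoc. apply Rmult_le_compat_l; [lra |].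
  destruct (Rk n k lam) as [re im]. simpl in Hre, Him |- *.
  change (re + - rk_limit n) with (re - rk_limit n). rewrite Ropp_0, Rplus_0_r.
  apply Rmax_lub; lra.
Qed.
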